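(* The Fomin–Kirillov algebra $\mathcal{E}_4$ admits no truncated point modules of degree greater than $1$; in particular $\mathcal{P}_2(\mathcal{E}_4)=\emptyset$.
   Context: Over an algebraically closed field $k$, $\mathcal{E}_4$ is the graded algebra generated by degree-$1$ elements $x_{ij}$, $1\leq i<j\leq 4$, subject to: $x_{ij}^2=0$; $x_{ij}x_{kl}=x_{kl}x_{ij}$ whenever $\{i,j\}\cap\{k,l\}=\emptyset$; $x_{ij}x_{jk}-x_{jk}x_{ik}-x_{ik}x_{ij}=0$ and $x_{jk}x_{ij}-x_{ik}x_{jk}-x_{ij}x_{ik}=0$ for $i<j<k$. A degree-$d$ truncated point module over a connected graded algebra $A$ generated in degree $1$ is a graded cyclic module generated in degree $0$ with Hilbert series $1+t+\cdots+t^d$; $\mathcal{P}_d(A)$ is the space of such modules. *)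

From mathcomp Require Import all_boot all_order all_algebra.
Set Implicit Arguments. Unset Strict Implicit. Unset Printing Implicit Defensive.
Import GRing.Theory.
Local Open Scope ring_scope.

(* The generators x_{ab} (1 <= a < b <= 4) of E_4 are indexed by pairs
   (a, b) : 'I_4 * 'I_4 with a < b  (0-based: 'I_4 = {0,1,2,3}).

   A graded module M = M_0 (+) ... (+) M_d with every M_i one-dimensional
   (Hilbert series 1 + t + ... + t^d) is, after choosing a basis vector e_i
   of each M_i, described by scalars
       act i a b  with  x_{ab} . e_i = act i a b * e_{i+1}   (i < d),
   while x_{ab} . e_d = 0 because M_{d+1} = 0.  Entries act i a b with
   a >= b or i >= d are irrelevant and ignored. *)
Definition gen_action (k : Type) := nat -> 'I_4 -> 'I_4 -> k.

(* The defining quadratic relations of E_4 act as zero from M_i to M_{i+2},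
   where X = action M_i -> M_{i+1}, Y = action M_{i+1} -> M_{i+2}.
   A product x_{ab} x_{ce} acts on M_i as "first x_{ce} (X), then x_{ab} (Y)". *)
Definition E4_relations_hold (k : comNzRingType) (X Y : 'I_4 -> 'I_4 -> k) : Prop :=
  [/\
      forall a b : 'I_4, (a < b)%N -> Y a b * X a b = 0,
      forall a b c e : 'I_4, (a < b)%N -> (c < e)%N ->
        a != c -> a != e -> b != c -> b != e ->
        Y a b * X c e = Y c e * X a b,
      forall a b c : 'I_4, (a < b)%N -> (b < c)%N ->
        Y a b * X b c - Y b c * X a c - Y a c * X a b = 0 &
      forall a b c : 'I_4, (a < b)%N -> (b < c)%N ->
        Y b c * X a b - Y a c * X b c - Y a b * X a c = 0].

(* A degree-d truncated point module over E_4 (in the basis described above):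
   - it is an E_4-module: every defining relation acts as zero (the only
     nontrivial instances are M_i -> M_{i+2} with i + 2 <= d);
   - it is cyclic generated by M_0: for each i <= d, M_i = A_i M_0, i.e. some
     word x_{w_{i-1}} ... x_{w_0} of length i in the generators maps e_0 to a
     nonzero multiple of e_i. *)
Definition truncated_point_module_E4 (k : comNzRingType) (d : nat)
    (act : gen_action k) : Prop :=
  (forall i : nat, (i.+2 <= d)%N -> E4_relations_hold (act i) (act i.+1)) /\
  (forall i : nat, (i <= d)%N ->
     exists w : seq ('I_4 * 'I_4),
       [/\ size w = i,
           all (fun p : 'I_4 * 'I_4 => (p.1 < p.2)%N) w &
           \prod_(j < i) act j (nth (ord0, ord0) w j).1 (nth (ord0, ord0) w j).2
             != 0]).

From mathcomp Require Import all_boot all_order all_algebra.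
From mathcomp Require Import ring.
Set Implicit Arguments. Unset Strict Implicit. Unset Printing Implicit Defensive.
Import GRing.Theory.
Local Open Scope ring_scope.

(* In a degree-2 truncated point module the actions M_0 -> M_1 and
   M_1 -> M_2 are points x, y of k^6, and a quadratic relation acts on M_0 by
   evaluating it on the rank-one tensor y (x) x.  The relations x_s^2 = 0 kill
   the diagonal entries y_s x_s, and every off-diagonal entry y_s x_t occurs in
   a relation y_s x_t = y_t x_s (disjoint generators) or
   y_s x_t - y_t x_u - y_u x_s = 0 (three generators forming a triangle).
   Multiplying such a relation by y_s x_t and regrouping the rank-one products
   gives (y_s x_t)^2 = 0, so y (x) x = 0 over any integral domain, which
   contradicts M_2 = A_2 M_0. *)

Lemma rank_one_swap_eq0 (R : idomainType) (ya xa yb xb : R) :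
  ya * xa = 0 -> ya * xb = yb * xa -> ya * xb = 0.
Proof.
move=> Ha swap; apply/eqP; rewrite -sqrf_eq0.
have -> : (ya * xb) ^+ 2 = (ya * xa) * (yb * xb) by rewrite expr2 {2}swap; ring.
by rewrite Ha mul0r.
Qed.

Lemma rank_one_cycle_eq0 (R : idomainType) (ya xa yb xb yc xc : R) :
  ya * xa = 0 -> yb * xb = 0 -> yc * xc = 0 ->
  ya * xb - yb * xc - yc * xa = 0 ->
  [/\ ya * xb = 0, yb * xc = 0 & yc * xa = 0].
Proof.
move=> Ha Hb Hc rel.
split; apply/eqP; rewrite -sqrf_eq0 expr2.
- have -> : ya * xb * (ya * xb) = ya * xb * (ya * xb - yb * xc - yc * xa)
      + (yb * xb) * (ya * xc) + (ya * xa) * (yc * xb) by ring.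
  by rewrite rel Ha Hb !mul0r mulr0 !addr0.
- have -> : yb * xc * (yb * xc) = - (yb * xc) * (ya * xb - yb * xc - yc * xa)
      + (yb * xb) * (ya * xc) - (yc * xc) * (yb * xa) by ring.
  by rewrite rel Hb Hc !mul0r mulr0 subr0 addr0.
- have -> : yc * xa * (yc * xa) = - (yc * xa) * (ya * xb - yb * xc - yc * xa)
      + (ya * xa) * (yc * xb) - (yc * xc) * (yb * xa) by ring.
  by rewrite rel Ha Hc !mul0r mulr0 subr0 addr0.
Qed.

Section RankOneAnnihilator.

Variables (R : idomainType) (X Y : 'I_4 -> 'I_4 -> R).
Hypothesis rels : E4_relations_hold X Y.

Lemma E4_triangle_terms_eq0 (a b c : 'I_4) : (a < b)%N -> (b < c)%N ->
  [/\ Y a b * X b c = 0, Y b c * X a c = 0 & Y a c * X a b = 0].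
Proof.
case: rels => sq _ tri _ ab bc; have ac := ltn_trans ab bc.
exact: rank_one_cycle_eq0 (sq _ _ ab) (sq _ _ bc) (sq _ _ ac) (tri _ _ _ ab bc).
Qed.

Lemma E4_triangle_reversed_terms_eq0 (a b c : 'I_4) :
  (a < b)%N -> (b < c)%N ->
  [/\ Y b c * X a b = 0, Y a b * X a c = 0 & Y a c * X b c = 0].
Proof.
case: rels => sq _ _ tri' ab bc; have ac := ltn_trans ab bc.
have rel := tri' _ _ _ ab bc; rewrite addrAC in rel.
exact: rank_one_cycle_eq0 (sq _ _ bc) (sq _ _ ab) (sq _ _ ac) rel.
Qed.

Lemma E4_disjoint_term_eq0 (a b c e : 'I_4) : (a < b)%N -> (c < e)%N ->
  a != c -> a != e -> b != c -> b != e -> Y c e * X a b = 0.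
Proof.
case: rels => sq comm _ _ ab ce ac ae bc be.
exact: rank_one_swap_eq0 (sq _ _ ce) (esym (comm _ _ _ _ ab ce ac ae bc be)).
Qed.

Lemma E4_relations_rank_one_eq0 (a b c e : 'I_4) :
  (a < b)%N -> (c < e)%N -> Y c e * X a b = 0.
Proof.
move=> ab ce; have [sq _ _ _] := rels.
have [ac | ac] := eqVneq a c.
  subst c; case: (ltngtP b e) => [be | eb | /val_inj be].
  - by case: (E4_triangle_terms_eq0 ab be) => *.
  - by case: (E4_triangle_reversed_terms_eq0 ce eb) => *.
  - by subst e; exact: sq.
have [ae | ae] := eqVneq a e.
  by subst e; case: (E4_triangle_terms_eq0 ce ab) => *.
have [bc | bc] := eqVneq b c.
  by subst c; case: (E4_triangle_reversed_terms_eq0 ab ce) => *.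
have [be | be] := eqVneq b e.
  subst e; case: (ltngtP a c) => [a_lt_c | c_lt_a | /val_inj ca].
  - by case: (E4_triangle_terms_eq0 a_lt_c ce) => *.
  - by case: (E4_triangle_reversed_terms_eq0 c_lt_a ab) => *.
  - by rewrite ca eqxx in ac.
exact: E4_disjoint_term_eq0.
Qed.

End RankOneAnnihilator.

Theorem E4_no_truncated_point_module (R : idomainType) (d : nat) :
  (1 < d)%N -> forall act : gen_action R, ~ truncated_point_module_E4 d act.
Proof.
move=> d_gt1 act [rels spans].
have [w [size_w all_w]] := spans 2%N d_gt1.
case: w size_w all_w => [|[a b] [|[c e] []]] //= _ /and3P[ab ce _].
rewrite big_ord_recr big_ord_recr big_ord0 /= mul1r mulrC.
by rewrite (E4_relations_rank_one_eq0 (rels 0%N d_gt1) ab ce) eqxx.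
Qed.

Theorem proposition2p2 (k : closedFieldType) (d : nat) :
  (1 < d)%N -> forall act : gen_action k, ~ truncated_point_module_E4 d act.
Proof. exact: E4_no_truncated_point_module. Qed.
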